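(* Let $(X_1,\dots,X_d)$, $d\ge 3$, be a binary random vector following a determinantal point process with correlation kernel $K$, where $K$ is a real symmetric $d\times d$ matrix with all eigenvalues strictly in $(0,1)$, all entries of $K$ are nonzero, and $K_{1i}>0$ for all $i=2,\dots,d$. Then: (i) $K_{ii}=\mathbb{P}[X_i=1]=\mathbb{E}[X_i]$ for all $i=1,\dots,d$; (ii) for all $i<j$, $-\mathrm{Cov}(X_i,X_j)>0$ and $|K_{ij}|=\sqrt{K_{ii}K_{jj}-\mathbb{P}[X_i=X_j=1]}=\sqrt{-\mathrm{Cov}(X_i,X_j)}$; (iii) for all $1<i<j\le d$, $$\mathrm{sgn}(K_{ij})=\mathrm{sgn}\Big(\mathbb{P}[X_1=1,X_i=1,X_j=1]-K_{11}K_{ii}K_{jj}+K_{11}K_{ij}^2+K_{ii}K_{1j}^2+K_{jj}K_{1i}^2\Big),$$ and this sign is $\pm1$ (never $0$). Consequently every entry of $K$ is uniquely determined by the marginal, pairwise, and threewise probabilities $\mathbb{P}[X_i=1]$, $\mathbb{P}[X_i=X_j=1]$, $\mathbb{P}[X_1=X_i=X_j=1]$.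
   Context: A binary random vector $(X_1,\dots,X_d)$ follows a determinantal point process (DPP) with correlation kernel $K$ if, writing $S=\{j: X_j=1\}$, one has $\mathbb{P}[s\subseteq S]=\mathbb{P}[X_j=1\ \forall j\in s]=\det K_s$ for all $s\subseteq\{1,\dots,d\}$, where $K_s=[K_{ij}]_{i,j\in s}$ is the principal submatrix indexed by $s$. Here $\mathrm{sgn}(x)=1$ if $x>0$, $-1$ if $x<0$, $0$ if $x=0$. *)

From HB Require Import structures.
From mathcomp Require Import all_boot all_order all_algebra.
Set Implicit Arguments. Unset Strict Implicit. Unset Printing Implicit Defensive.
Import Order.TTheory GRing.Theory Num.Theory.
Local Open Scope ring_scope.

(* Indices {1,...,d} are 'I_d (index 1 of the paper = ordinal with value 0).
   A random subset S of 'I_d is given by its law P : {ffun {set 'I_d} -> R};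
   X_j = 1 iff j \in S. *)

Definition principal_minor (R : comRingType) (d : nat) (K : 'M[R]_d)
  (s : {set 'I_d}) : R :=
  \det (\matrix_(a < #|s|, b < #|s|) K (enum_val a) (enum_val b)).

Definition is_distribution (R : numDomainType) (d : nat)
  (P : {ffun {set 'I_d} -> R}) : Prop :=
  (forall S, 0 <= P S) /\ \sum_(S : {set 'I_d}) P S = 1.

Definition prob (R : numDomainType) (d : nat) (P : {ffun {set 'I_d} -> R})
  (E : pred {set 'I_d}) : R := \sum_(S : {set 'I_d} | E S) P S.

Definition Xv (R : numDomainType) (d : nat) (i : 'I_d) (S : {set 'I_d}) : R :=
  (i \in S)%:R.

Definition expect (R : numDomainType) (d : nat) (P : {ffun {set 'I_d} -> R})
  (f : {set 'I_d} -> R) : R := \sum_(S : {set 'I_d}) P S * f S.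

Definition cov (R : numDomainType) (d : nat) (P : {ffun {set 'I_d} -> R})
  (i j : 'I_d) : R :=
  expect P (fun S => Xv R i S * Xv R j S)
  - expect P (Xv R i) * expect P (Xv R j).

Definition is_DPP (R : numDomainType) (d : nat) (K : 'M[R]_d)
  (P : {ffun {set 'I_d} -> R}) : Prop :=
  is_distribution P /\
  forall s : {set 'I_d}, prob P (fun S => s \subset S) = principal_minor K s.

Definition kernel_hyp (R : rcfType) (d : nat) (K : 'M[R]_d) : Prop :=
  [/\ K^T = K,
      (forall a : R, eigenvalue K a -> 0 < a < 1),
      (forall i j, K i j != 0) &
      (forall k i : 'I_d, val k = 0%N -> val i != 0%N -> 0 < K k i)].

From HB Require Import structures.
From mathcomp Require Import all_boot all_order all_algebra.
From mathcomp Require Import ring.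
Set Implicit Arguments. Unset Strict Implicit. Unset Printing Implicit Defensive.
Import Order.TTheory GRing.Theory Num.Theory.
Local Open Scope ring_scope.

(* By the DPP identity, the marginal, pairwise and threewise inclusion
   probabilities are the principal minors of K of size 1, 2 and 3.  For a
   symmetric K this gives P[i, j in S] = K_ii K_jj - K_ij^2, so the diagonal
   and the |K_ij| are read off the first two orders, and
     P[1, i, j in S] = K_11 K_ii K_jj - K_11 K_ij^2 - K_ii K_1j^2 - K_jj K_1i^2
                       + 2 K_1i K_1j K_ij.
   Every term but the last is then known, and K_1i, K_1j > 0, so the
   threewise probabilities give the sign of K_ij. *)

Lemma det_mx22 (R : comPzRingType) (A : 'M[R]_2) :
  \det A = A 0 0 * A 1 1 - A 0 1 * A 1 0.
Proof.
rewrite (expand_det_row _ ord0) !big_ord_recr big_ord0 /= /cofactor !det_mx11.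
rewrite !mxE /= add0r !expr0 !expr1 mul1r mulN1r mulrN.
by congr (A _ _ * A _ _ - A _ _ * A _ _); apply/val_inj.
Qed.

Lemma det_mx33 (R : comPzRingType) (A : 'M[R]_3) :
  \det A = A 0 0 * (A 1 1 * A 2 2 - A 1 2 * A 2 1)
         - A 0 1 * (A 1 0 * A 2 2 - A 1 2 * A 2 0)
         + A 0 2 * (A 1 0 * A 2 1 - A 1 1 * A 2 0).
Proof.
rewrite (expand_det_row _ ord0) !big_ord_recr big_ord0 /= /cofactor !det_mx22.
rewrite !mxE /= add0r !expr0 !expr1 mul1r mulN1r mulrN add0n expr2 mulN1r.
rewrite opprK mul1r.
by congr (A _ _ * (A _ _ * A _ _ - A _ _ * A _ _)
        - A _ _ * (A _ _ * A _ _ - A _ _ * A _ _)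
        + A _ _ * (A _ _ * A _ _ - A _ _ * A _ _)); apply/val_inj.
Qed.

Lemma enum_set_ord_sorted d (s : {set 'I_d}) : sorted ltn (map val (enum s)).
Proof.
have -> : enum s = [seq x <- enum 'I_d | x \in s] by rewrite enumT.
apply: (subseq_sorted ltn_trans (map_subseq _ (filter_subseq _ _))).
by rewrite val_enum_ord iota_ltn_sorted.
Qed.

Lemma enum_set_ord_eq d (s : {set 'I_d}) (t : seq 'I_d) :
  sorted ltn (map val t) -> s =i t -> enum s = t.
Proof.
move=> sorted_t eq_st; apply: (inj_map val_inj).
apply: (irr_sorted_eq ltn_trans ltnn (enum_set_ord_sorted s) sorted_t).
by apply: eq_mem_map => x; rewrite mem_enum eq_st.
Qed.

Lemma principal_minor_enum (R : comNzRingType) d (K : 'M[R]_d) (s : {set 'I_d})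
    (i0 : 'I_d) :
  principal_minor K s = \det (\matrix_(a < size (enum s), b < size (enum s))
                                K (nth i0 (enum s) a) (nth i0 (enum s) b)).
Proof.
rewrite /principal_minor; have := cardE s; move: (size (enum s)) => n e.
case: n / e; congr (\det _); apply/matrixP => a b.
by rewrite !mxE !(enum_val_nth i0).
Qed.

Section PrincipalMinors.
Variables (R : comNzRingType) (d : nat) (K : 'M[R]_d).

Lemma principal_minor1 (i : 'I_d) : principal_minor K [set i] = K i i.
Proof. by rewrite (principal_minor_enum K _ i) enum_set1 det_mx11 mxE. Qed.

Lemma principal_minor2 (i j : 'I_d) : i != j ->
  principal_minor K [set i; j] = K i i * K j j - K i j * K j i.
Proof.
wlog lt_ij : i j / (i < j)%N => [hwlog|] neq_ij.
  have [lt_ij|lt_ji|/val_inj eq_ij] := ltngtP i j; first exact: hwlog.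
  - by rewrite setUC hwlog 1?eq_sym // mulrC [K j i * _]mulrC.
  - by rewrite eq_ij eqxx in neq_ij.
have enum_ij : enum [set i; j] = [:: i; j].
  by apply: enum_set_ord_eq; [rewrite /= lt_ij | move=> x; rewrite !inE].
by rewrite (principal_minor_enum K _ i) enum_ij det_mx22 !mxE.
Qed.

Lemma principal_minor3 (k i j : 'I_d) : (k < i)%N -> (i < j)%N ->
  principal_minor K [set k; i; j] =
    K k k * (K i i * K j j - K i j * K j i)
  - K k i * (K i k * K j j - K i j * K j k)
  + K k j * (K i k * K j i - K i i * K j k).
Proof.
move=> lt_ki lt_ij; have enum_kij : enum [set k; i; j] = [:: k; i; j].
  apply: enum_set_ord_eq; first by rewrite /= lt_ki lt_ij.
  by move=> x; rewrite !inE orbA.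
by rewrite (principal_minor_enum K _ i) enum_kij det_mx33 !mxE.
Qed.

End PrincipalMinors.

Section Moments.
Variables (R : numDomainType) (d : nat) (P : {ffun {set 'I_d} -> R}).

Lemma eq_prob (E1 E2 : pred {set 'I_d}) : E1 =1 E2 -> prob P E1 = prob P E2.
Proof. exact: eq_bigl. Qed.

Lemma expect_indicator (E : pred {set 'I_d}) :
  expect P (fun S => (E S)%:R) = prob P E.
Proof.
rewrite /expect /prob [RHS]big_mkcond; apply: eq_bigr => S _.
by case: (E S); rewrite ?mulr1 ?mulr0.
Qed.

Lemma expect_Xv (i : 'I_d) : expect P (Xv R i) = prob P (fun S => i \in S).
Proof. exact: expect_indicator. Qed.

Lemma covE (i j : 'I_d) :
  cov P i j = prob P (fun S => (i \in S) && (j \in S))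
              - prob P (fun S => i \in S) * prob P (fun S => j \in S).
Proof.
rewrite /cov !expect_Xv; congr (_ - _); rewrite -expect_indicator.
by apply: eq_bigr => S _; rewrite /Xv -natrM mulnb.
Qed.

End Moments.

Lemma sym_mxE (T : Type) n (A : 'M[T]_n) : A^T = A -> forall i j, A j i = A i j.
Proof. by move=> symA i j; rewrite -{1}symA mxE. Qed.

Section DPPMoments.
Variables (R : numDomainType) (d : nat) (K : 'M[R]_d) (P : {ffun {set 'I_d} -> R}).
Hypothesis symK : K^T = K.
Hypothesis dppKP : is_DPP K P.

Let K_sym := sym_mxE symK.

Lemma dpp_prob1 (i : 'I_d) : prob P (fun S => i \in S) = K i i.
Proof.
rewrite -principal_minor1 -dppKP.2; apply: eq_prob => S.
by rewrite sub1set.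
Qed.

Lemma dpp_prob2 (i j : 'I_d) : i != j ->
  prob P (fun S => (i \in S) && (j \in S)) = K i i * K j j - K i j ^+ 2.
Proof.
move=> neq_ij; have -> : prob P (fun S => (i \in S) && (j \in S)) =
                         principal_minor K [set i; j].
  by rewrite -dppKP.2; apply: eq_prob => S; rewrite subUset !sub1set.
by rewrite principal_minor2 // (K_sym i j) expr2.
Qed.

Lemma dpp_prob3 (k i j : 'I_d) : (k < i)%N -> (i < j)%N ->
  prob P (fun S => [&& k \in S, i \in S & j \in S]) =
    K k k * K i i * K j j - K k k * K i j ^+ 2 - K i i * K k j ^+ 2
    - K j j * K k i ^+ 2 + 2 * K k i * K k j * K i j.
Proof.
move=> lt_ki lt_ij.
have -> : prob P (fun S => [&& k \in S, i \in S & j \in S]) =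
          principal_minor K [set k; i; j].
  by rewrite -dppKP.2; apply: eq_prob => S; rewrite !subUset !sub1set andbA.
by rewrite principal_minor3 // (K_sym k i) (K_sym k j) (K_sym i j); ring.
Qed.

Lemma dpp_cov (i j : 'I_d) : i != j -> - cov P i j = K i j ^+ 2.
Proof. by move=> neq_ij; rewrite covE dpp_prob2 // !dpp_prob1; ring. Qed.

End DPPMoments.

Lemma sgr_pm1 (R : numDomainType) (x : R) : x != 0 ->
  Num.sg x = 1 \/ Num.sg x = -1.
Proof. by move=> /neqr0_sign <-; case: (x < 0); [right | left]. Qed.

Section FirstRowPositive.
Variables (R : realDomainType) (d : nat) (K : 'M[R]_d).
Hypothesis row0_gt0 : forall k i : 'I_d, val k = 0%N -> val i != 0%N -> 0 < K k i.

Lemma row0_gt0_lt (k i : 'I_d) : val k = 0%N -> (k < i)%N -> 0 < K k i.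
Proof. by move=> k0 lt_ki; apply: row0_gt0; rewrite // -lt0n -k0. Qed.

Variable P : {ffun {set 'I_d} -> R}.
Hypotheses (symK : K^T = K) (dppKP : is_DPP K P).

Lemma dpp_sg_entry (k i j : 'I_d) : val k = 0%N -> (0 < i)%N -> (i < j)%N ->
  Num.sg (prob P (fun S => [&& k \in S, i \in S & j \in S])
          - K k k * K i i * K j j + K k k * K i j ^+ 2
          + K i i * K k j ^+ 2 + K j j * K k i ^+ 2) = Num.sg (K i j).
Proof.
move=> k0 i_gt0 lt_ij; have lt_ki : (k < i)%N by rewrite k0.
have lt_kj := ltn_trans lt_ki lt_ij.
rewrite (dpp_prob3 symK dppKP) // (_ : _ - _ + _ + _ + _ = 2 * K k i * K k j * K i j).
  by rewrite sgrM gtr0_sg ?mul1r // !mulr_gt0 // row0_gt0_lt.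
by ring.
Qed.

End FirstRowPositive.

Section Identifiability.
Variables (R : realDomainType) (d : nat) (K K' : 'M[R]_d).
Variables (P P' : {ffun {set 'I_d} -> R}).
Hypotheses (symK : K^T = K) (symK' : K'^T = K').
Hypotheses (dppKP : is_DPP K P) (dppK'P' : is_DPP K' P').
Hypothesis row0_gt0 : forall k i : 'I_d, val k = 0%N -> val i != 0%N -> 0 < K k i.
Hypothesis row0_gt0' : forall k i : 'I_d, val k = 0%N -> val i != 0%N -> 0 < K' k i.
Hypothesis eq_prob1 : forall i : 'I_d,
  prob P' (fun S => i \in S) = prob P (fun S => i \in S).
Hypothesis eq_prob2 : forall i j : 'I_d,
  prob P' (fun S => (i \in S) && (j \in S))
  = prob P (fun S => (i \in S) && (j \in S)).
Hypothesis eq_prob3 : forall k i j : 'I_d, val k = 0%N ->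
  prob P' (fun S => [&& k \in S, i \in S & j \in S])
  = prob P (fun S => [&& k \in S, i \in S & j \in S]).

Lemma dpp_diag_eq (i : 'I_d) : K' i i = K i i.
Proof. by rewrite -(dpp_prob1 dppKP) -(dpp_prob1 dppK'P') eq_prob1. Qed.

Lemma dpp_sqr_eq (i j : 'I_d) : i != j -> K' i j ^+ 2 = K i j ^+ 2.
Proof.
move=> neq_ij; have := eq_prob2 i j.
rewrite (dpp_prob2 symK dppKP) // (dpp_prob2 symK' dppK'P') // !dpp_diag_eq.
by move/addrI/oppr_inj.
Qed.

Lemma dpp_row0_eq (k i : 'I_d) : val k = 0%N -> K' k i = K k i.
Proof.
move=> k0; have [i0|neq_ik] := eqVneq (val i) 0%N.
  by rewrite (_ : i = k) ?dpp_diag_eq //; apply: val_inj; rewrite i0 k0.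
have neq_ki : k != i by apply: contraNneq neq_ik => <-; rewrite k0.
apply/eqP; rewrite -(eqrXn2 (ltn0Sn 1)) ?ltW ?row0_gt0 ?row0_gt0' //.
exact/eqP/dpp_sqr_eq.
Qed.

Lemma dpp_offrow0_eq (i j : 'I_d) : (0 < i)%N -> (i < j)%N -> K' i j = K i j.
Proof.
move=> i_gt0 lt_ij; have d_gt0 : (0 < d)%N by rewrite (ltn_trans i_gt0).
pose k : 'I_d := Ordinal d_gt0; have lt_kj := ltn_trans i_gt0 lt_ij.
have neq_ij : i != j by rewrite -val_eqE neq_ltn lt_ij.
have := @eq_prob3 k i j erefl.
rewrite (dpp_prob3 symK dppKP) // (dpp_prob3 symK' dppK'P') // !dpp_diag_eq.
rewrite (@dpp_row0_eq k i erefl) (@dpp_row0_eq k j erefl) dpp_sqr_eq // => /addrI.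
have c_gt0 : 0 < 2 * K k i * K k j.
  by rewrite !mulr_gt0 // row0_gt0 //= -lt0n.
by move/(mulfI (lt0r_neq0 c_gt0)).
Qed.

Lemma dpp_kernel_unique : K' = K.
Proof.
apply/matrixP => i j; have [lt_ij|lt_ji|/val_inj <-] := ltngtP i j.
- by have [i0|i_gt0] := posnP i; [exact: dpp_row0_eq | exact: dpp_offrow0_eq].
- rewrite (sym_mxE symK') (sym_mxE symK).
  by have [j0|j_gt0] := posnP j; [exact: dpp_row0_eq | exact: dpp_offrow0_eq].
- exact: dpp_diag_eq.
Qed.

End Identifiability.

Theorem proposition3 (R : rcfType) (d : nat) (hd : (3 <= d)%N)
  (K : 'M[R]_d) (P : {ffun {set 'I_d} -> R}) :
  kernel_hyp K -> is_DPP K P ->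
  (* (i) *)
  (forall i : 'I_d,
     K i i = prob P (fun S => i \in S) /\
     prob P (fun S => i \in S) = expect P (Xv R i)) /\
  (* (ii) *)
  (forall i j : 'I_d, (i < j)%N ->
     0 < - cov P i j /\
     `|K i j| = Num.sqrt (K i i * K j j - prob P (fun S => (i \in S) && (j \in S))) /\
     Num.sqrt (K i i * K j j - prob P (fun S => (i \in S) && (j \in S)))
       = Num.sqrt (- cov P i j)) /\
  (* (iii) ; k is the index 1 of the paper *)
  (forall k i j : 'I_d, val k = 0%N -> (0 < i)%N -> (i < j)%N ->
     Num.sg (K i j) =
       Num.sg (prob P (fun S => [&& k \in S, i \in S & j \in S])
               - K k k * K i i * K j j + K k k * K i j ^+ 2
               + K i i * K k j ^+ 2 + K j j * K k i ^+ 2) /\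
     (Num.sg (K i j) = 1 \/ Num.sg (K i j) = -1)) /\
  (* consequence: K is determined by marginal, pairwise and threewise
     probabilities among all kernels satisfying the same hypotheses *)
  (forall (K' : 'M[R]_d) (P' : {ffun {set 'I_d} -> R}),
     kernel_hyp K' -> is_DPP K' P' ->
     (forall i : 'I_d, prob P' (fun S => i \in S) = prob P (fun S => i \in S)) ->
     (forall i j : 'I_d,
        prob P' (fun S => (i \in S) && (j \in S))
        = prob P (fun S => (i \in S) && (j \in S))) ->
     (forall k i j : 'I_d, val k = 0%N ->
        prob P' (fun S => [&& k \in S, i \in S & j \in S])
        = prob P (fun S => [&& k \in S, i \in S & j \in S])) ->
     K' = K).
Proof.
move=> hK dppKP; have [symK _ K_neq0 row0_gt0] := hK.
split; [|split; [|split]].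
- by move=> i; rewrite (dpp_prob1 dppKP) expect_Xv (dpp_prob1 dppKP).
- move=> i j lt_ij; have neq_ij : i != j by rewrite -val_eqE neq_ltn lt_ij.
  rewrite (dpp_cov symK dppKP) // (dpp_prob2 symK dppKP) //.
  by rewrite opprB addrC subrK sqrtr_sqr exprn_even_gt0 ?K_neq0 ?orbT.
- move=> k i j k0 i_gt0 lt_ij; rewrite (dpp_sg_entry row0_gt0 symK dppKP) //.
  by split; last exact/sgr_pm1/K_neq0.
- move=> K' P' hK' dppK'P'; have [symK' _ _ row0_gt0'] := hK'.
  exact: dpp_kernel_unique.
Qed.
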